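(* Let $p\geq1$ and let $A$ be a complex $r$-matrix of order $n_1\times\cdots\times n_r$. (a) For every $k\in[r]$, \[ \|A\|_p\geq\frac{1}{n_1^{1/p}\cdots n_r^{1/p}}\sum_{j\in[n_k]}\big|\Sigma A^{(k)}_j\big|.\qquad( * ) \] (b) If $A$ is nonnegative, $p>1$, and equality holds in $( * )$ for all $k\in[r]$, then $A$ is regular. (c) If $p\geq r$ and $A$ is nonnegative, then equality holds in $( * )$ for all $k\in[r]$ if and only if $A$ is regular.
   Context: An $r$-matrix of order $n_1\times\cdots\times n_r$ is a function on $[n_1]\times\cdots\times[n_r]$ with values $a_{i_1,\ldots,i_r}$. For $k\in[r]$, $j\in[n_k]$, the slice $A^{(k)}_j$ is the $(r-1)$-matrix obtained by fixing $i_k=j$; $\Sigma B$ is the sum of all entries of $B$. $A$ is regular if for every $k\in[r]$, $\Sigma A^{(k)}_1=\cdots=\Sigma A^{(k)}_{n_k}$. The spectral $p$-norm is $\|A\|_p=\max\{|\sum a_{i_1,\ldots,i_r}\overline{x^{(1)}_{i_1}}\cdots\overline{x^{(r)}_{i_r}}|:\mathbf{x}^{(k)}\in\mathbb{C}^{n_k},\ |\mathbf{x}^{(k)}|_p=1\ \forall k\}$. *)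

From HB Require Import structures.
From mathcomp Require Import all_boot all_order all_algebra.
From mathcomp Require Import classical_sets reals exp.
From mathcomp Require Import complex.
Set Implicit Arguments. Unset Strict Implicit. Unset Printing Implicit Defensive.
Import Order.TTheory GRing.Theory Num.Theory.
Local Open Scope ring_scope.

Definition cabs (R : realType) (z : R[i]) : R :=
  Num.sqrt (complex.Re z ^+ 2 + complex.Im z ^+ 2).

Definition idx (r : nat) (n : 'I_r -> nat) := {dffun forall k : 'I_r, 'I_(n k)}.

Definition rmatrix (R : realType) (r : nat) (n : 'I_r -> nat) := idx n -> R[i].

(* Sigma A^{(k)}_j : sum of the entries of the slice i_k = j *)
Definition slice_sum (R : realType) r (n : 'I_r -> nat) (A : rmatrix R n)
  (k : 'I_r) (j : 'I_(n k)) : R[i] :=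
  \sum_(i : idx n | i k == j) A i.
Arguments slice_sum {R r n} A k j.

Definition regular (R : realType) r (n : 'I_r -> nat) (A : rmatrix R n) : Prop :=
  forall (k : 'I_r) (j j' : 'I_(n k)), slice_sum A k j = slice_sum A k j'.

Definition nonneg_rmatrix (R : realType) r (n : 'I_r -> nat) (A : rmatrix R n) : Prop :=
  forall i, 0 <= A i.

Definition lpnorm (R : realType) (p : R) m (x : 'I_m -> R[i]) : R :=
  powR (\sum_(j < m) powR (cabs (x j)) p) (p^-1).

Definition mform (R : realType) r (n : 'I_r -> nat) (A : rmatrix R n)
  (x : forall k : 'I_r, 'I_(n k) -> R[i]) : R[i] :=
  \sum_(i : idx n) A i * \prod_(k < r) (x k (i k))^*.

(* spectral p-norm: sup (attained, hence a max) over unit vectors *)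
Definition spnorm (R : realType) (p : R) r (n : 'I_r -> nat) (A : rmatrix R n) : R :=
  reals.sup [set cabs (mform A x) | x in
     [set x : forall k : 'I_r, 'I_(n k) -> R[i] | forall k, lpnorm p (x k) = 1]]%classic.

(* right-hand side of ( * ) *)
Definition lower_bound (R : realType) (p : R) r (n : 'I_r -> nat) (A : rmatrix R n)
  (k : 'I_r) : R :=
  (\prod_(l < r) powR (n l)%:R (p^-1))^-1 * \sum_(j < n k) cabs (slice_sum A k j).

(* (a) Test the form on the unit vectors that are uniform, with entries
   n_l^(-1/p), in every direction l <> k, and in direction k uniform but rotated
   by the phases of the slice sums: the form then equals the right-hand side of
   ( * ).  (b) If the slice sums along k of a nonnegative A are not all equal,
   enlarging the k-th uniform vector at a largest slice sum and renormalising
   strictly increases the form, so ( * ) is strict.  (c) If A is nonnegative and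
   regular, every slice sum along l equals (Sigma A) / n_l.  AM-GM over the r
   factors bounds prod_l n_l^(1/p) |x^(l)_(i_l)| by the mean of their r-th
   powers, and for a unit vector the power-mean inequality (r <= p) gives
   n_l^(r/p) sum_j |x^(l)_j|^r <= n_l; summing against A yields the reverse
   of ( * ). *)

From HB Require Import structures.
From mathcomp Require Import all_boot all_order all_algebra.
From mathcomp Require Import classical_sets reals exp.
From mathcomp Require Import complex.
From mathcomp Require Import ring lra.
Import Order.TTheory GRing.Theory Num.Theory.
Local Open Scope ring_scope.

Section PowR.
Context {R : realType}.
Implicit Types u v w x p s : R.

Lemma powR_le_affine {u s} : 0 <= u -> 0 <= s <= 1 -> u `^ s <= s * u + (1 - s).
Proof.
move=> u0 /andP[]; rewrite le_eqVlt => /predU1P[<- _|s0].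
  by rewrite powRr0 mul0r subr0 add0r.
rewrite le_eqVlt => /predU1P[->|s1]; first by rewrite powRr1 // mul1r subrr addr0.
have := @conjugate_powR R (u `^ s) 1 s^-1 (1 - s)^-1 (powR_ge0 _ _) ler01.
rewrite !invr_gt0 subr_gt0 !invrK addrC subrK powR1 mulr1 -powRrM.
by rewrite mulfV ?gt_eqF // powRr1 // [u * s]mulrC mul1r; apply.
Qed.

Lemma powR_ge_bernoulli {w p} : 1 <= p -> 0 <= w -> 1 + p * (w - 1) <= w `^ p.
Proof.
move=> p1 w0; have p0 : 0 < p by lra.
have s01 : 0 <= p^-1 <= 1 by rewrite invr_ge0 ltW //= invr_le1 ?unitfE ?gt_eqF.
have := powR_le_affine (powR_ge0 w p) s01.
rewrite -powRrM mulfV ?gt_eqF // powRr1 // => h.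
have := ler_wpM2l (ltW p0) h.
by rewrite mulrDr mulrA mulfV ?gt_eqF // mul1r mulrBr mulr1 mulfV ?gt_eqF //; lra.
Qed.

Lemma powRVl x p : 0 <= x -> x^-1 `^ p = (x `^ p)^-1.
Proof. by move=> x0; rewrite -!powR_inv1 ?powR_ge0 // powRAC. Qed.

Lemma powRK x p : 0 <= x -> p != 0 -> (x `^ p) `^ p^-1 = x.
Proof. by move=> x0 p0; rewrite -powRrM mulfV // powRr1. Qed.

Lemma powRVK x p : 0 <= x -> p != 0 -> (x `^ p^-1) `^ p = x.
Proof. by move=> x0 p0; rewrite -powRrM mulVf // powRr1. Qed.

Lemma powR_sub1_lt {v p} : 1 <= p -> 1 < v -> v `^ p - 1 < p * (v - 1) * v `^ p.
Proof.
move=> p1 v1; have v0 : 0 < v by lra.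
have w0 : 0 < v^-1 by rewrite invr_gt0.
have w1 : v^-1 < 1 by rewrite invf_lt1.
have vw : v * v^-1 = 1 by rewrite mulfV ?gt_eqF.
have P0 : 0 < v `^ p := powR_gt0 p v0.
have h : (1 + p * (v^-1 - 1)) * v `^ p <= 1.
  have := ler_wpM2r (ltW P0) (powR_ge_bernoulli p1 (ltW w0)).
  by rewrite powRVl ?(ltW v0) // mulVf // gt_eqF.
set w := v^-1 in vw w1 w0 h *; set P := v `^ p in P0 h *.
have wv : 1 - w < v - 1 by nra.
have : p * P * (1 - w) < p * P * (v - 1) by rewrite ltr_pM2l // mulr_gt0 //; lra.
nra.
Qed.

Lemma ltr_powR2r {e x y} : 0 < e -> 0 <= x -> 0 <= y -> (x `^ e < y `^ e) = (x < y).
Proof.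
move=> e0 x0 y0; apply/idP/idP; last exact: gt0_ltr_powR.
by rewrite !ltNge; apply: contra => yx; apply: ge0_ler_powR; rewrite ?nnegrE ?(ltW e0).
Qed.

Lemma powR_perturb_gain {M S c v p} : 1 <= p -> 0 < S -> 0 < M -> 0 <= c -> 1 < v ->
  v `^ p = M * c / S -> S `^ p * (M - 1 + v `^ p) < M * (S + c * (v - 1)) `^ p.
Proof.
move=> p1 S0 M0 c0 v1 vp.
set W := 1 + c * (v - 1) / S.
have W0 : 0 <= W.
  by rewrite addr_ge0 // divr_ge0 ?(ltW S0) // mulr_ge0 // subr_ge0 ltW.
have -> : S + c * (v - 1) = S * W by rewrite /W; field; rewrite gt_eqF.
rewrite (powRM _ (ltW S0) W0) mulrCA ltr_pM2l ?powR_gt0 //.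
apply: (@lt_le_trans _ _ (M * (1 + p * (W - 1)))); last first.
  by rewrite ler_pM2l // powR_ge_bernoulli.
have -> : M * (1 + p * (W - 1)) = M + p * (v - 1) * v `^ p.
  by rewrite vp /W; field; rewrite gt_eqF.
have := powR_sub1_lt p1 v1; lra.
Qed.

Lemma powR_perturb_gt {M S c v p} : 1 <= p -> 0 < S -> 1 <= M -> 0 <= c -> 1 < v ->
  v `^ p = M * c / S ->
  (M `^ p^-1)^-1 * S < (S + c * (v - 1)) / (M - 1 + v `^ p) `^ p^-1.
Proof.
move=> p1 S0 M1 c0 v1 vp; have p0 : 0 < p by lra.
have M0 : 0 < M by lra.
have Z0 : 0 < M - 1 + v `^ p by have := powR_gt0 p (lt_trans ltr01 v1); lra.
have gain := powR_perturb_gain p1 S0 M0 c0 v1 vp.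
have q0 : 0 <= S + c * (v - 1) by rewrite addr_ge0 ?(ltW S0) // mulr_ge0 // subr_ge0 ltW.
rewrite ltr_pdivlMr ?powR_gt0 // -mulrA ltr_pdivrMl ?powR_gt0 //.
rewrite -(ltr_powR2r p0) ?mulr_ge0 ?powR_ge0 ?(ltW S0) //.
rewrite (powRM _ (ltW S0) (powR_ge0 _ _)) (powRM _ (powR_ge0 _ _) q0).
by rewrite !powRVK ?(ltW Z0) ?(ltW M0) ?gt_eqF.
Qed.

Lemma sum_lt_mul_max {m} {s : 'I_m -> R} a j :
  (forall i, s i <= s a) -> s j != s a -> \sum_i s i < m%:R * s a.
Proof.
move=> amax ja; rewrite -[m in m%:R]card_ord mulr_natl -sumr_const.
rewrite (lt_leif (leif_sum (fun i _ => leif_eq (amax i)))).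
by apply: contra ja => /forallP/(_ j)/implyP/(_ isT).
Qed.

Lemma sum_powR_normalize {m} {z : 'I_m -> R} {p} : p != 0 -> (forall j, 0 <= z j) ->
  0 < \sum_j z j `^ p -> \sum_j (z j / (\sum_i z i `^ p) `^ p^-1) `^ p = 1.
Proof.
move=> p0 z0; set Z := \sum_i _ => Z0.
have N0 : 0 <= Z `^ p^-1 := powR_ge0 _ _.
under eq_bigr do rewrite powRM ?invr_ge0 // powRVl // powRVK ?(ltW Z0) //.
by rewrite -mulr_suml mulfV ?gt_eqF.
Qed.

Lemma exists_lp_unit_gt_uniform {m} {s : 'I_m -> R} {p} :
  1 <= p -> (forall j, 0 <= s j) -> (exists a b, s a != s b) ->
  exists2 y : 'I_m -> R, (forall j, 0 <= y j) /\ \sum_j y j `^ p = 1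
    & (m%:R `^ p^-1)^-1 * \sum_j s j < \sum_j s j * y j.
Proof.
move=> p1 s0 [a0 [b0 sab]]; have p0 : 0 < p by lra.
have [a _ amax] := @arg_maxP _ _ _ a0 predT s isT.
have m1 : 1 <= m%:R :> R by rewrite ler1n (leq_ltn_trans _ (ltn_ord a0)).
set S := \sum_j s j.
have S_lt : S < m%:R * s a.
  have [ea|] := eqVneq (s a0) (s a); last exact: sum_lt_mul_max (fun i => amax i isT).
  by apply: (sum_lt_mul_max _ b0 (fun i => amax i isT)); rewrite -ea eq_sym.
have S_gt0 : 0 < S.
  rewrite lt_def sumr_ge0 // andbT; apply: contra sab => /eqP S0.
  by rewrite !(psumr_eq0P (fun j _ => s0 j) S0).
have rho0 : 0 <= m%:R * s a / S by rewrite divr_ge0 ?mulr_ge0 // ltW.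
set v := (m%:R * s a / S) `^ p^-1.
have vp : v `^ p = m%:R * s a / S by rewrite powRVK ?gt_eqF.
have v1 : 1 < v.
  have -> : 1 = 1 `^ p^-1 :> R by rewrite powR1.
  by rewrite ltr_powR2r ?invr_gt0 ?ltr_pdivlMr ?mul1r.
(* Raise the uniform vector at a largest coordinate of [s], then renormalise. *)
set z := fun j => if j == a then v else 1.
have z0 j : 0 <= z j by rewrite /z; case: eqP; lra.
have sum_z : \sum_j z j `^ p = m%:R - 1 + v `^ p.
  rewrite (bigD1 a) //= /z eqxx (eq_bigr (fun=> 1)) => [|j /negbTE ->]; last first.
    by rewrite powR1.
  rewrite sumr_const cardC1 card_ord addrC -subn1 natrB //.
  exact: leq_ltn_trans (leq0n a0) (ltn_ord a0).
have sum_sz : \sum_j s j * z j = S + s a * (v - 1).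
  rewrite /S (bigD1 a) //= [in RHS](bigD1 a) //= /z eqxx.
  rewrite (eq_bigr s) => [|j /negbTE -> ]; [ring | exact: mulr1].
have Z0 : 0 < \sum_j z j `^ p.
  by have := powR_gt0 p (lt_trans ltr01 v1); rewrite sum_z; lra.
set N := (\sum_j z j `^ p) `^ p^-1.
have N0 : 0 < N by apply: powR_gt0.
exists (fun j => z j / N).
  split=> [j|]; first by rewrite divr_ge0 // ltW.
  by apply: sum_powR_normalize; rewrite ?gt_eqF.
under [X in _ < X]eq_bigr do rewrite mulrA.
rewrite -mulr_suml sum_sz /N sum_z.
exact: powR_perturb_gt p1 S_gt0 m1 (s0 a) v1 vp.
Qed.

Lemma prod_le_mean_exprn {m} {z : 'I_m -> R} : (0 < m)%N -> (forall l, 0 <= z l) ->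
  \prod_l z l <= m%:R^-1 * \sum_l z l ^+ m.
Proof.
move=> m0 z0.
have := (leif_AGM (A := 'I_m) (fun l _ => exprn_ge0 m (z0 l))).1.
rewrite /= card_ord.
rewrite prodrXl mulrC ler_pXn2r // nnegrE ?prodr_ge0 //.
by rewrite mulr_ge0 ?invr_ge0 ?sumr_ge0 // => l _; rewrite exprn_ge0.
Qed.

Lemma lp_unit_sum_exprn_le {m} {y : 'I_m -> R} {p k} : (0 < k)%N -> k%:R <= p ->
  (forall j, 0 <= y j) -> \sum_j y j `^ p = 1 ->
  (m%:R `^ p^-1) ^+ k * \sum_j y j ^+ k <= m%:R.
Proof.
move=> k0 kp y0 ys.
have p0 : 0 < p by apply: lt_le_trans kp; rewrite ltr0n.
set s := p^-1 * k%:R.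
have s01 : 0 <= s <= 1.
  by rewrite mulr_ge0 ?invr_ge0 ?ler0n ?(ltW p0) //= ler_pdivrMl // mulr1.
have hj j : (m%:R `^ p^-1) ^+ k * y j ^+ k <= s * (m%:R * y j `^ p) + (1 - s).
  have := powR_le_affine (mulr_ge0 (ler0n _ m) (powR_ge0 (y j) p)) s01.
  rewrite powRM ?powR_ge0 // /s !powRrM -!powR_mulrn ?powR_ge0 //.
  by rewrite powRK ?gt_eqF.
rewrite mulr_sumr; apply: le_trans (ler_sum _ (fun j _ => hj j)) _.
rewrite big_split /= -!mulr_sumr ys mulr1 sumr_const card_ord.
by rewrite -[(1 - s) *+ m]mulr_natr -mulrDl addrC subrK mul1r.
Qed.

End PowR.

Section ComplexModulus.
Context {R : realType}.
Local Notation C := R[i].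
Implicit Types z : C.

Lemma cabsE z : (cabs z)%:C%C = `|z|.
Proof. by rewrite normc_def. Qed.

Lemma cabs_ge0 z : 0 <= cabs z.
Proof. exact: sqrtr_ge0. Qed.

Lemma cabs_real (c : R) : 0 <= c -> cabs c%:C%C = c.
Proof. by move=> c0; apply: (@complexI R); rewrite cabsE ger0_norm ?lecR. Qed.

Lemma ge0_cabsE z : 0 <= z -> (cabs z)%:C%C = z.
Proof. by move=> z0; rewrite cabsE ger0_norm. Qed.

Lemma conj_realc (c : R) : (c%:C%C)^* = c%:C%C.
Proof. exact: conjc_real. Qed.

Definition phase z : C := if z == 0 then 1 else z / `|z|.

Lemma norm_phase z : `|phase z| = 1.
Proof.
rewrite /phase; case: eqP => [_|/eqP z0]; first exact: normr1.
by rewrite normrM normfV normr_id mulfV // normr_eq0.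
Qed.

Lemma mul_conj_phase z : z * (phase z)^* = `|z|.
Proof.
rewrite /phase; case: eqP => [->|/eqP z0]; first by rewrite mul0r normr0.
rewrite rmorphM /= fmorphV /= (conj_Creal (normr_real _)) mulrA -normCK.
by rewrite expr2 mulfK // normr_eq0.
Qed.

End ComplexModulus.

Section LpNorm.
Context {R : realType} {p : R} {m : nat}.
Local Notation C := R[i].
Hypothesis p1 : 1 <= p.

Lemma lpnorm_eq1 {v : 'I_m -> C} : lpnorm p v = 1 -> \sum_j cabs (v j) `^ p = 1.
Proof.
have p0 : 0 < p := lt_le_trans ltr01 p1.
move=> /(congr1 (fun t => t `^ p)); rewrite /= powR1 powRVK ?gt_eqF //.
by rewrite sumr_ge0 // => j _; rewrite powR_ge0.
Qed.

Lemma lpnorm_entry_le1 {v : 'I_m -> C} : lpnorm p v = 1 -> forall j, cabs (v j) <= 1.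
Proof.
move=> /lpnorm_eq1 v1 j; have p0 : 0 < p := lt_le_trans ltr01 p1.
have : cabs (v j) `^ p <= 1.
  rewrite -v1 (bigD1 j) //= lerDl.
  by rewrite sumr_ge0 // => i _; rewrite powR_ge0.
apply: contraTT; rewrite -!ltNge => v_gt1.
by rewrite -(ltr_powR2r p0) ?powR1 ?cabs_ge0 in v_gt1.
Qed.

End LpNorm.

Section RMatrix.
Context {R : realType} {r : nat} {n : 'I_r -> nat}.
Local Notation C := R[i].
Implicit Types (A : rmatrix R n) (p : R).

Lemma sum_by_slice {V : comPzRingType} (F : idx n -> V) l (g : 'I_(n l) -> V) :
  \sum_(i : idx n) F i * g (i l) = \sum_j (\sum_(i : idx n | i l == j) F i) * g j.
Proof.
rewrite (partition_big (fun i : idx n => i l) predT) //=.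
by apply: eq_bigr => j _; rewrite mulr_suml; apply: eq_bigr => i /eqP ->.
Qed.

Lemma cabs_mform_le A x :
  cabs (mform A x) <= \sum_i cabs (A i) * \prod_l cabs (x l (i l)).
Proof.
rewrite -lecR cabsE rmorph_sum /=; apply: le_trans (ler_norm_sum _ _ _) _.
apply: ler_sum => i _; rewrite normrM normr_prod rmorphM rmorph_prod /= cabsE.
by under eq_bigr do rewrite norm_conjC -cabsE.
Qed.

Definition uniform_entry p m : R := (m%:R `^ p^-1)^-1.

Lemma uniform_entry_gt0 p {m} : (0 < m)%N -> 0 < uniform_entry p m.
Proof. by move=> m0; rewrite invr_gt0 powR_gt0 // ltr0n. Qed.

Lemma lpnorm_uniform {p m} : 1 <= p -> (0 < m)%N ->
  lpnorm p (fun _ : 'I_m => (uniform_entry p m)%:C%C) = 1.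
Proof.
move=> p1 m0; have p0 : p != 0 by rewrite gt_eqF // (lt_le_trans ltr01 p1).
rewrite /lpnorm cabs_real; last exact/ltW/uniform_entry_gt0.
rewrite sumr_const card_ord /uniform_entry powRVl ?powR_ge0 // powRVK ?ler0n //.
by rewrite -[_ *+ m]mulr_natr mulVf ?powR1 // pnatr_eq0 -lt0n.
Qed.

Definition uniform_but p k (v : 'I_(n k) -> C) : forall l, 'I_(n l) -> C :=
  fun l j => if l =P k is ReflectT e then v (cast_ord (congr1 n e) j)
             else (uniform_entry p (n l))%:C%C.

Lemma uniform_but_eq p k v : uniform_but p k v k =1 v.
Proof.
by move=> j; rewrite /uniform_but; case: eqP => // e; congr v; apply: val_inj.
Qed.

Lemma uniform_but_neq p k v l : l != k ->
  uniform_but p k v l =1 fun=> (uniform_entry p (n l))%:C%C.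
Proof. by move=> lk j; rewrite /uniform_but; case: eqP => // e; rewrite e eqxx in lk. Qed.

Lemma lpnorm_uniform_but {p} k {v} : 1 <= p -> (forall l, (0 < n l)%N) ->
  lpnorm p v = 1 -> forall l, lpnorm p (uniform_but p k v l) = 1.
Proof.
move=> p1 n0 v1 l; have [->|lk] := eqVneq l k.
  by rewrite -v1 /lpnorm; under eq_bigr do rewrite uniform_but_eq.
rewrite -(lpnorm_uniform p1 (n0 l)) /lpnorm.
by under eq_bigr do rewrite uniform_but_neq //.
Qed.

Lemma mform_uniform_but A p k v :
  mform A (uniform_but p k v) =
  (\prod_(l < r | l != k) uniform_entry p (n l))%:C%C * \sum_j slice_sum A k j * (v j)^*.
Proof.
rewrite /mform /slice_sum -(sum_by_slice A k (fun j => (v j)^*)) mulr_sumr.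
apply: eq_bigr => i _.
rewrite (bigD1 k) //= uniform_but_eq mulrA mulrC; congr (_ * _).
rewrite rmorph_prod; apply: eq_bigr => l lk.
by rewrite uniform_but_neq // conj_realc.
Qed.

Lemma mform_le_spnorm {p} A {x} : 1 <= p -> (forall l, lpnorm p (x l) = 1) ->
  cabs (mform A x) <= spnorm p A.
Proof.
move=> p1 x1; apply: ub_le_sup; last by exists x.
exists (\sum_i cabs (A i)) => _ [y y1 <-].
apply: le_trans (cabs_mform_le A y) _; apply: ler_sum => i _.
rewrite ler_piMr ?cabs_ge0 // prodr_ile1 // => l _.
by rewrite cabs_ge0 (lpnorm_entry_le1 p1 (y1 l)).
Qed.

Lemma spnorm_le p A b : 1 <= p -> (forall l, (0 < n l)%N) ->
  (forall x, (forall l, lpnorm p (x l) = 1) -> cabs (mform A x) <= b) ->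
  spnorm p A <= b.
Proof.
move=> p1 n0 hb; apply: ge_sup => [|_ [x x1 <-]]; last exact: hb.
set u := fun l (_ : 'I_(n l)) => (uniform_entry p (n l))%:C%C.
by exists (cabs (mform A u)), u => // l; exact: lpnorm_uniform.
Qed.

Lemma lower_boundE p A k : lower_bound p A k =
  (\prod_(l < r | l != k) uniform_entry p (n l)) *
  (uniform_entry p (n k) * \sum_j cabs (slice_sum A k j)).
Proof.
by rewrite /lower_bound -prodfV (bigD1 k) //= mulrA [_ * uniform_entry _ _]mulrC.
Qed.

Lemma lower_bound_le_spnorm p A k : 1 <= p -> (forall l, (0 < n l)%N) ->
  lower_bound p A k <= spnorm p A.
Proof.
move=> p1 n0; rewrite lower_boundE; set c := uniform_entry p (n k).
have c0 : 0 < c := uniform_entry_gt0 p (n0 k).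
set v := fun j => c%:C%C * phase (slice_sum A k j).
have v1 : lpnorm p v = 1.
  rewrite -(lpnorm_uniform p1 (n0 k)) /lpnorm; congr (_ `^ _).
  apply: eq_bigr => j _; congr (_ `^ _); apply: (@complexI R).
  by rewrite !cabsE normrM norm_phase mulr1.
apply: le_trans (mform_le_spnorm A p1 (lpnorm_uniform_but k p1 n0 v1)).
rewrite mform_uniform_but.
have -> : \sum_j slice_sum A k j * (v j)^* = (c * \sum_j cabs (slice_sum A k j))%:C%C.
  rewrite rmorphM rmorph_sum mulr_sumr; apply: eq_bigr => j _.
  by rewrite rmorphM /= conj_realc mulrCA mul_conj_phase cabsE.
rewrite -rmorphM cabs_real // mulr_ge0 ?prodr_ge0 // => [l _|].
  exact/ltW/uniform_entry_gt0.
by rewrite mulr_ge0 ?(ltW c0) // sumr_ge0 // => j _; exact: cabs_ge0.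
Qed.

Lemma lower_bound_lt_spnorm {p A k j j'} : 1 <= p -> (forall l, (0 < n l)%N) ->
  nonneg_rmatrix A -> slice_sum A k j != slice_sum A k j' ->
  lower_bound p A k < spnorm p A.
Proof.
move=> p1 n0 A0 jj'; rewrite lower_boundE.
set s := fun j => cabs (slice_sum A k j).
have sE i : (s i)%:C%C = slice_sum A k i by rewrite ge0_cabsE // sumr_ge0.
have [y [y0 y1] lt_sy] : exists2 y : 'I_(n k) -> R,
    (forall j, 0 <= y j) /\ \sum_j y j `^ p = 1
    & uniform_entry p (n k) * \sum_j s j < \sum_j s j * y j.
  apply: exists_lp_unit_gt_uniform p1 (fun _ => cabs_ge0 _) _.
  by exists j, j'; apply: contra jj' => /eqP sjj'; rewrite -!sE /s sjj'.
set v := fun j => (y j)%:C%C.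
have v1 : lpnorm p v = 1.
  by rewrite /lpnorm; under eq_bigr do rewrite cabs_real //; rewrite y1 powR1.
apply: lt_le_trans (mform_le_spnorm A p1 (lpnorm_uniform_but k p1 n0 v1)).
rewrite mform_uniform_but.
have -> : \sum_j slice_sum A k j * (v j)^* = (\sum_j s j * y j)%:C%C.
  by rewrite rmorph_sum; apply: eq_bigr => i _; rewrite conj_realc -sE rmorphM.
have P0 : 0 < \prod_(l < r | l != k) uniform_entry p (n l).
  by rewrite prodr_gt0 // => l _; exact: uniform_entry_gt0.
rewrite -rmorphM cabs_real ?ltr_pM2l // mulr_ge0 ?(ltW P0) // sumr_ge0 // => i _.
by rewrite mulr_ge0 ?cabs_ge0.
Qed.

Lemma spnorm_eq_lower_bound_regular p A : 1 <= p -> (forall l, (0 < n l)%N) ->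
  nonneg_rmatrix A -> (forall k, spnorm p A = lower_bound p A k) -> regular A.
Proof.
move=> p1 n0 A0 eqA k j j'; apply/eqP/negP => /negP jj'.
by have := lower_bound_lt_spnorm p1 n0 A0 jj'; rewrite (eqA k) ltxx.
Qed.

Section Regular.
Variables (A : rmatrix R n) (p : R).
Hypotheses (A0 : nonneg_rmatrix A) (n0 : forall l, (0 < n l)%N).

Let a i := cabs (A i).
Let T := \sum_i a i.

Lemma cabs_slice_sum l j : cabs (slice_sum A l j) = \sum_(i : idx n | i l == j) a i.
Proof.
apply: (@complexI R); rewrite ge0_cabsE ?sumr_ge0 // rmorph_sum.
by apply: eq_bigr => i _; rewrite /= /a ge0_cabsE.
Qed.

Lemma lower_bound_nonneg k : lower_bound p A k = (\prod_l uniform_entry p (n l)) * T.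
Proof.
rewrite /lower_bound -prodfV; congr (_ * _).
rewrite /T (partition_big (fun i : idx n => i k) predT) //=.
by apply: eq_bigr => j _; rewrite cabs_slice_sum.
Qed.

Hypothesis regA : regular A.

Lemma regular_abs_slice l j : \sum_(i : idx n | i l == j) a i = T / (n l)%:R.
Proof.
have cst j' : \sum_(i : idx n | i l == j') a i = \sum_(i : idx n | i l == j) a i.
  by rewrite -!cabs_slice_sum (regA l j' j).
have -> : T = (n l)%:R * \sum_(i : idx n | i l == j) a i.
  rewrite /T (partition_big (fun i : idx n => i l) predT) //=.
  by rewrite (eq_bigr _ (fun j' _ => cst j')) sumr_const card_ord mulr_natl.
by rewrite mulrC mulKf // pnatr_eq0 -lt0n.
Qed.

Hypotheses (p1 : 1 <= p) (rp : r%:R <= p).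

Lemma sum_slice_power_le {l} {y : 'I_(n l) -> C} : lpnorm p y = 1 ->
  \sum_i a i * ((n l)%:R `^ p^-1 * cabs (y (i l))) ^+ r <= T.
Proof.
move=> y1; have r0 : (0 < r)%N := leq_ltn_trans (leq0n l) (ltn_ord l).
have nl0 : 0 < (n l)%:R :> R by rewrite ltr0n.
rewrite (sum_by_slice a l (fun j => ((n l)%:R `^ p^-1 * cabs (y j)) ^+ r)).
under eq_bigr do rewrite regular_abs_slice exprMn mulrA.
rewrite -mulr_sumr -mulrA.
have := lp_unit_sum_exprn_le r0 rp (fun j => cabs_ge0 (y j)) (lpnorm_eq1 p1 y1).
have T0 : 0 <= T by rewrite sumr_ge0 // => i _; exact: cabs_ge0.
move/(ler_wpM2l (divr_ge0 T0 (ltW nl0))).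
by rewrite divfK ?gt_eqF.
Qed.

Lemma cabs_mform_le_regular x : (0 < r)%N -> (forall l, lpnorm p (x l) = 1) ->
  cabs (mform A x) <= (\prod_l uniform_entry p (n l)) * T.
Proof.
move=> r0 x1; rewrite /uniform_entry prodfV mulrC.
set d := fun l => (n l)%:R `^ p^-1.
have d0 l : 0 < d l by rewrite powR_gt0 // ltr0n.
have D0 : 0 < \prod_l d l by rewrite prodr_gt0.
rewrite ler_pdivlMr //.
apply: le_trans (ler_wpM2r (ltW D0) (cabs_mform_le A x)) _; rewrite mulr_suml.
have amgm i : \prod_l cabs (x l (i l)) * \prod_l d l <=
    r%:R^-1 * \sum_l (d l * cabs (x l (i l))) ^+ r.
  rewrite -big_split /=; under eq_bigr do rewrite mulrC.
  by apply: prod_le_mean_exprn => // l; rewrite mulr_ge0 ?cabs_ge0 ?(ltW (d0 l)).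
apply: (@le_trans _ _ (\sum_i a i * (r%:R^-1 * \sum_l (d l * cabs (x l (i l))) ^+ r))).
  by apply: ler_sum => i _; rewrite -mulrA ler_wpM2l ?cabs_ge0.
under eq_bigr do rewrite mulrCA mulr_sumr.
rewrite -mulr_sumr exchange_big /=.
apply: le_trans (ler_wpM2l _ (ler_sum _ (fun l _ => sum_slice_power_le (x1 l)))) _.
  by rewrite invr_ge0.
by rewrite sumr_const card_ord -[T *+ r]mulr_natl mulKf // pnatr_eq0 -lt0n.
Qed.

Lemma spnorm_le_lower_bound k : spnorm p A <= lower_bound p A k.
Proof.
rewrite lower_bound_nonneg; apply: spnorm_le => // x x1.
by apply: cabs_mform_le_regular x1; exact: leq_ltn_trans (leq0n _) (ltn_ord k).
Qed.

End Regular.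

End RMatrix.

Theorem theorem21 (R : realType) (p : R) (r : nat) (n : 'I_r -> nat)
  (npos : forall k, (0 < n k)%N) (hp : 1 <= p) (A : rmatrix R n) :
  (* (a) *)
  (forall k : 'I_r, lower_bound p A k <= spnorm p A) /\
  (* (b) *)
  (nonneg_rmatrix A -> 1 < p ->
     (forall k : 'I_r, spnorm p A = lower_bound p A k) -> regular A) /\
  (* (c) *)
  (r%:R <= p -> nonneg_rmatrix A ->
     ((forall k : 'I_r, spnorm p A = lower_bound p A k) <-> regular A)).
Proof.
have part_a k : lower_bound p A k <= spnorm p A := lower_bound_le_spnorm p A k hp npos.
have part_b : nonneg_rmatrix A -> (forall k, spnorm p A = lower_bound p A k) -> regular A.
  exact: spnorm_eq_lower_bound_regular hp npos.
(* (b) holds already for p = 1. *)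
split=> //; split=> [A0 _|rp A0]; first exact: part_b.
split; first exact: part_b.
move=> regA k; apply/eqP; rewrite eq_le part_a andbT.
exact: spnorm_le_lower_bound A0 npos regA hp rp k.
Qed.
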